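(* Let $1 \le n \le N$ be integers, let $\mathcal{X} = \{1,\ldots,N\}^n$, let $P$ be the uniform distribution on $\mathcal{X}$ (weights $1/N^n$), and let $Q$ be the uniform distribution on the set $\mathcal{X}_*$ of all $x = (x_1,\ldots,x_n) \in \mathcal{X}$ with pairwise distinct components (weights $1/[N]_n$ on $\mathcal{X}_*$ and $0$ elsewhere). Then \[ \frac{n(n-1)}{2N} \ \le \ \log \rho(Q,P) \ \le \ - \frac{n}{2} \log \Bigl( 1 - \frac{n-1}{N} \Bigr) . \]
   Context: For real $a$ and integers $m \ge 1$, $[a]_m := \prod_{i=0}^{m-1}(a-i)$, and $[a]_0 := 1$. For probability measures $Q,P$ on $(\mathcal{X},\mathcal{A})$, $\rho(Q,P) := \sup_{A \in \mathcal{A}} Q(A)/P(A)$ with the conventions $0/0 := 0$ and $a/0 := \infty$ for $a>0$. *)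

From HB Require Import structures.
From mathcomp Require Import all_boot all_order all_algebra.
From mathcomp Require Import classical_sets boolp reals ereal exp.
Set Implicit Arguments. Unset Strict Implicit. Unset Printing Implicit Defensive.
Import Order.TTheory GRing.Theory Num.Theory.
Local Open Scope ring_scope.

Definition ffact (R : pzRingType) (a : R) (m : nat) : R :=
  \prod_(i < m) (a - i%:R).

(* A probability measure on a finite set X with sigma-algebra 2^X,
   given by its weight function p; its value on A. *)
Definition probA (R : realType) (T : finType) (p : T -> R) (A : {set T}) : R :=
  \sum_(x in A) p x.

Definition ratio (R : realType) (T : finType) (Q P : T -> R) (A : {set T})
  : \bar R :=
  if probA P A == 0 then (if probA Q A == 0 then 0%E else +oo%E)
  else (probA Q A / probA P A)%:E.

Definition rho (R : realType) (T : finType) (Q P : T -> R) : \bar R :=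
  ereal_sup (range (ratio Q P)).

(* Q is r times P on the injective tuples and 0 elsewhere, where
   1/r = [N]_n / N^n = prod_(i < n) (1 - i/N); so rho(Q,P) = r, attained on
   the singleton of any injective tuple, and
   log r = - sum_(i < n) log (1 - i/N).  The lower bound is log (1 - x) <= -x
   summed over i.  For the upper bound pair i with n-1-i:
   (1 - u)(1 - v) >= 1 - (u + v) and u + v = (n-1)/N for every pair. *)

From Pilot Require Import Defs.
From HB Require Import structures.
From mathcomp Require Import all_boot all_order all_algebra.
From mathcomp Require Import classical_sets boolp reals ereal exp.
From mathcomp Require Import ring lra zify.
Import Order.TTheory GRing.Theory Num.Theory.
Local Open Scope ring_scope.

Lemma ffact_exp_prod (F : fieldType) (a : F) (m : nat) : a != 0 ->
  ffact a m = a ^+ m * \prod_(i < m) (1 - i%:R / a).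
Proof.
move=> a0; rewrite -[in a ^+ m](card_ord m) -prodr_const /ffact -big_split /=.
by apply: eq_bigr => i _; rewrite mulrBr mulr1 mulrCA divff ?mulr1.
Qed.

Lemma sumr_ord_natr (F : fieldType) (m : nat) :
  2%:R != 0 :> F -> \sum_(i < m) (i%:R : F) = m%:R * (m%:R - 1) / 2%:R.
Proof.
move=> two0; apply: (mulIf two0); rewrite divfK //.
elim: m => [|m IH]; first by rewrite big_ord0 !mul0r.
by rewrite big_ord_recr /= mulrDl IH -natr1; ring.
Qed.

Lemma ln_prod (R : realType) (m : nat) (a : 'I_m -> R) :
  (forall i, 0 < a i) -> ln (\prod_(i < m) a i) = \sum_(i < m) ln (a i).
Proof.
elim: m a => [|m IH] a a_gt0; first by rewrite !big_ord0 ln1.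
by rewrite !big_ord_recr /= lnM ?IH ?posrE ?prodr_gt0.
Qed.

Lemma ln_1B_add_le (R : realType) (u v : R) :
  0 <= u -> 0 <= v -> u + v < 1 -> ln (1 - (u + v)) <= ln (1 - u) + ln (1 - v).
Proof.
move=> u0 v0 uv1; have uv_pos : 0 < 1 - (u + v) by lra.
have u_pos : 0 < 1 - u by lra.
have v_pos : 0 < 1 - v by lra.
rewrite -lnM ?posrE // ler_ln ?posrE ?mulr_gt0 //.
by rewrite -subr_ge0 (_ : _ - _ = u * v) ?mulr_ge0 //; ring.
Qed.

Lemma rho_eq_attained_density_bound (R : realType) (T : finType)
    (Q P : T -> R) (r : R) (x0 : T) :
  (forall x, 0 < P x) -> (forall x, 0 <= Q x) -> (forall x, Q x <= r * P x) ->
  Q x0 = r * P x0 -> rho Q P = r%:E.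
Proof.
move=> P_gt0 Q_ge0 QrP Qx0; have r_ge0 : 0 <= r.
  by rewrite -(pmulr_lge0 _ (P_gt0 x0)) -Qx0.
apply/eqP; rewrite eq_le; apply/andP; split.
  apply: ge_ereal_sup => _ [A _ <-].
  have PA_ge0 : 0 <= probA P A by apply: sumr_ge0 => x _; apply: ltW.
  have QA_le : probA Q A <= r * probA P A.
    by rewrite /probA mulr_sumr; apply: ler_sum => x _.
  rewrite /Defs.ratio; case: ifPn => [/eqP PA0|PA0].
    have QA_ge0 : 0 <= probA Q A by apply: sumr_ge0.
    have -> : probA Q A == 0 by rewrite eq_le QA_ge0 andbT -(mulr0 r) -PA0.
    by rewrite lee_fin.
  by rewrite lee_fin ler_pdivrMr // lt_def PA0.
apply: le_ereal_sup_tmp; exists (Defs.ratio Q P [set x0]).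
  by exists [set x0].
by rewrite /Defs.ratio /probA !big_set1 gt_eqF // Qx0 mulfK ?gt_eqF.
Qed.

Section FallingRatios.

Variables (R : realType) (n N : nat).
Hypotheses (n_gt0 : (0 < n)%N) (n_le_N : (n <= N)%N).

Let N_gt0 : 0 < (N%:R : R).
Proof. by rewrite ltr0n (leq_trans n_gt0). Qed.

Lemma falling_ratio_gt0 (i : 'I_n) : 0 < 1 - (i%:R : R) / N%:R.
Proof.
by rewrite subr_gt0 ltr_pdivrMr // mul1r ltr_nat (leq_trans (ltn_ord i)).
Qed.

Lemma sum_ln_falling_ratio_le :
  \sum_(i < n) ln (1 - (i%:R : R) / N%:R) <= - (n%:R * (n%:R - 1) / (2 * N%:R)).
Proof.
have -> : n%:R * (n%:R - 1) / (2 * N%:R) = \sum_(i < n) (i%:R : R) / N%:R.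
  by rewrite -mulr_suml sumr_ord_natr ?pnatr_eq0 // invfM mulrA.
rewrite -sumrN; apply: ler_sum => i _.
rewrite le_ln1Dx // ltrN2 ltr_pdivrMr // mul1r ltr_nat.
exact: leq_trans (ltn_ord i) n_le_N.
Qed.

Lemma sum_ln_falling_ratio_ge :
  n%:R / 2 * ln (1 - (n%:R - 1) / N%:R) <=
  \sum_(i < n) ln (1 - (i%:R : R) / N%:R).
Proof.
set f := fun i : 'I_n => ln (1 - (i%:R : R) / N%:R).
have pair_ge (i : 'I_n) : ln (1 - (n%:R - 1) / N%:R) <= f i + f (rev_ord i).
  have -> : (n%:R - 1) / N%:R = (i%:R : R) / N%:R + (rev_ord i)%:R / N%:R.
    by rewrite -mulrDl /= natrB // -natr1; congr (_ * _); ring.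
  apply: ln_1B_add_le; rewrite ?divr_ge0 ?ler0n ?ltW //.
  rewrite -mulrDl ltr_pdivrMr // mul1r -natrD ltr_nat /=.
  have := ltn_ord i; lia.
have sum_rev : \sum_(i < n) f (rev_ord i) = \sum_(i < n) f i.
  by rewrite (reindex_inj rev_ord_inj); apply: eq_bigr => i _; rewrite rev_ordK.
have two_sums :
    n%:R * ln (1 - (n%:R - 1) / N%:R) <= \sum_(i < n) f i + \sum_(i < n) f i.
  rewrite -{2}sum_rev -big_split /= mulr_natl -[in X in _ *+ X](card_ord n).
  rewrite -sumr_const.
  by apply: ler_sum => i _.
lra.
Qed.

End FallingRatios.

Theorem mainTheorem2 (R : realType) (n N : nat) (hn : (1 <= n)%N) (hnN : (n <= N)%N) :
  let P := fun x : {ffun 'I_n -> 'I_N} => 1 / (N%:R ^+ n) : R in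
  let Q := fun x : {ffun 'I_n -> 'I_N} =>
             if injectiveb x then 1 / ffact (N%:R : R) n else 0 in
  exists r : R, rho Q P = r%:E /\
    n%:R * (n%:R - 1) / (2 * N%:R) <= ln r /\
    ln r <= - (n%:R / 2) * ln (1 - (n%:R - 1) / N%:R).
Proof.
move=> P Q; set a := fun i : 'I_n => 1 - (i%:R : R) / N%:R.
have a_gt0 i : 0 < a i by apply: falling_ratio_gt0.
have N_gt0 : 0 < (N%:R : R) by rewrite ltr0n (leq_trans hn).
set r := (\prod_(i < n) a i)^-1.
have r_gt0 : 0 < r by rewrite invr_gt0 prodr_gt0.
have P_gt0 x : 0 < P x by rewrite /P div1r invr_gt0 exprn_gt0.
have Q_eq x : Q x = if injectiveb x then r * P x else 0.
  by rewrite /Q ffact_exp_prod ?gt_eqF // /P !div1r invfM mulrC.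
pose x0 := [ffun i : 'I_n => widen_ord hnN i].
have x0_inj : injectiveb x0.
  by apply/injectiveP => i j; rewrite /x0 !ffunE => -[/ord_inj].
exists r; split.
  have rP_ge0 x : 0 <= r * P x by rewrite mulr_ge0 ?ltW.
  apply: (@rho_eq_attained_density_bound _ _ _ _ _ x0) => [//|x|x|];
    by rewrite Q_eq ?x0_inj //; case: ifP.
have -> : ln r = - \sum_(i < n) ln (a i).
  by rewrite lnV ?posrE ?prodr_gt0 ?ln_prod.
split; first by rewrite lerNr; apply: sum_ln_falling_ratio_le.
by rewrite mulNr lerN2; apply: sum_ln_falling_ratio_ge.
Qed.
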